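(* Fix an income $y>0$ and prices $0\le p_1'<p_1''\le y$, and consider an increase in the price of good 1 from $p_1'$ to $p_1''$. Suppose Assumptions 1 (with $U_0$ strictly increasing), 2, 3 and 4 hold. Let $\overline{p_1}$ be the minimum price $p_1\in[0,y]$ with $q_1(p_1,y)=0$. Then the equivalent variation $S^{EV}$ across the population has distribution $\Pr\{S^{EV}=0\}=1-q_1(p_1',y)$, $\Pr\{S^{EV}=\overline{p_1}-p_1'\}=q_1(p_1',y)-q_1(p_1'',y)$, $\Pr\{S^{EV}=p_1''-p_1'\}=q_1(p_1'',y)$. If instead Assumption 3 does not hold (Assumptions 1 with $U_0$ strictly increasing, 2 and 4 hold), then the consumers who switch from good 1 at price $p_1'$ to good 0 at price $p_1''$ (a proportion $q_1(p_1',y)-q_1(p_1'',y)$ of the population) have equivalent variation satisfying $y-p_1'\ge S^{EV}\ge \overline{p_1}-p_1'$.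
   Context: Two goods, $0$ (price $0$) and $1$ (price $p_1\ge0$). All consumers have common income $y>0$, choose one good and spend the remainder on a numeraire. All consumers share utility functions $U_0:(0,\infty)\to[0,\infty)$ (utility of good 0 with numeraire amount $z$) and $U_1:[0,\infty)\to[0,\infty)$ (utility of good 1 with residual numeraire $z$). Each consumer $i$ has an attention-price threshold $t_i\in(0,\infty]$; $G$ is the CDF of thresholds in the population. Consumer $i$ considers good 1 at price $p_1$ iff $p_1<t_i$ (good 0 is always considered), and chooses good 1 iff she considers it and $U_0(y)<U_1(y-p_1)$. Hence the observed choice probability is $q_{1}(p_{1},y)=\mathbb{1}\{U_{0}(y)<U_{1}(y-p_{1})\}\,(1-G(p_{1}))$. Assumption 1: (i) $U_0$ is (here strictly) increasing, $U_1$ is continuous and strictly increasing; (ii) for every $y>0$ there is $\bar p_1\in[0,y]$ with $U_0(y)\ge U_1(y-\bar p_1)$. Assumption 2: $G(0)=0$. Assumption 3: $G(t)<1$ for all finite $t$ (a positive mass of consumers pays attention at every price). Assumption 4: $q_1(p_1,y)$ is observed for all $p_1\in[p_1',y]$. Equivalent variation of consumer $i$ for the price increase from $p_1'$ to $p_1''$: if $p_1''<t_i$ (full attention), $S^{EV}$ is the solution $S$ of $\max\{U_0(y-S),U_1(y-S-p_1')\}=\max\{U_0(y),U_1(y-p_1'')\}$; if $p_1'<t_i\le p_1''$ (partial attention), it solves $\max\{U_0(y-S),U_1(y-S-p_1')\}=U_0(y)$; if $p_1'\ge t_i$ (no attention), it solves $U_0(y-S)=U_0(y)$. Probabilities $\Pr$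 refer to population proportions under $G$. *)

From HB Require Import structures.
From mathcomp Require Import all_boot all_order all_algebra.
From mathcomp Require Import all_classical all_reals all_analysis measurable_realfun.
Set Implicit Arguments. Unset Strict Implicit. Unset Printing Implicit Defensive.
Import Order.TTheory GRing.Theory Num.Theory.
Import numFieldNormedType.Exports.
Local Open Scope classical_set_scope.
Local Open Scope ring_scope.

(* [avail_value U0 U1 z p r] : with numeraire budget [z] and price [p] of good 1,
   the maximal utility over the goods the consumer can take equals [r], i.e.
   "max{U0(z), U1(z - p)} = r", where good 0 is available only if z > 0
   (domain of U0 is (0,oo)) and good 1 only if z - p >= 0 (domain of U1 is [0,oo)). *)
Definition avail_value (R : realType) (U0 U1 : R -> R) (z p r : R) : Prop :=
  (0 < z /\ U0 z = r /\ (0 <= z - p -> U1 (z - p) <= r)) \/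
  (0 <= z - p /\ U1 (z - p) = r /\ (0 < z -> U0 z <= r)).

(* [is_EV U0 U1 y p' p'' t S] : S is the equivalent variation of a consumer with
   attention threshold t (in (0,+oo], as an extended real) for the price increase
   p' -> p''. *)
Definition is_EV (R : realType) (U0 U1 : R -> R) (y p' p'' : R) (t : \bar R) (S : R)
  : Prop :=
  if (p''%:E < t)%E then
    avail_value U0 U1 (y - S) p' (Num.max (U0 y) (U1 (y - p'')))
  else if (p'%:E < t)%E then
    avail_value U0 U1 (y - S) p' (U0 y)
  else
    0 < y - S /\ U0 (y - S) = U0 y.

Definition cdfG (R : realType) (mu : probability (\bar R) R) (t : R) : R :=
  fine (mu [set x | (x <= t%:E)%E]).

Definition q1 (R : realType) (U0 U1 : R -> R) (mu : probability (\bar R) R)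
  (y p : R) : R :=
  (if U0 y < U1 (y - p) then 1 else 0) * (1 - cdfG mu p).

From HB Require Import structures.
From mathcomp Require Import all_boot all_order all_algebra.
From mathcomp Require Import all_classical all_reals all_analysis measurable_realfun.
From mathcomp Require Import lra.
Import Order.TTheory GRing.Theory Num.Theory.
Import numFieldNormedType.Exports.
Local Open Scope classical_set_scope.
Local Open Scope ring_scope.

(* The equivalent variation of a consumer is unique, because the indirect
   utility max{U0 z, U1 (z - p')} is strictly increasing in the budget z.  It is
   therefore 0 for the consumers who do not buy good 1 at p', p'' - p' for those
   who still buy it at p'', and for the switchers the S with
   U1 (y - S - p') = U0 y.  Under Assumption 3, q1 (p, y) vanishes exactly when
   U1 (y - p) <= U0 y, so by continuity of U1 the least such price pbar satisfies
   U1 (y - pbar) = U0 y, i.e. S = pbar - p'.  Without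
   Assumption 3, pbar still lies below every price p with U1 (y - p) <= U0 y,
   which bounds the switchers' S from below. *)

Lemma measurable_EFin_gt {R : realType} (r : R) :
  measurable [set t : \bar R | (r%:E < t)%E].
Proof.
have -> : [set t : \bar R | (r%:E < t)%E] = [set` `]r%:E, +oo[].
  by apply/seteqP; split => t /=; rewrite in_itv /= andbT.
exact: emeasurable_itv.
Qed.

Lemma probability_EFin_gt {R : realType} (mu : probability (\bar R) R) (r : R) :
  mu [set t | (r%:E < t)%E] = (1 - cdfG mu r)%:E.
Proof.
have mle : measurable [set t : \bar R | (t <= r%:E)%E].
  have -> : [set t : \bar R | (t <= r%:E)%E] = [set` `]-oo, r%:E]].
    by apply/seteqP; split => t /=; rewrite in_itv.
  exact: emeasurable_itv.
have -> : [set t | (r%:E < t)%E] = ~` [set t | (t <= r%:E)%E].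
  by apply/seteqP; split => t /=; rewrite ltNge => /negP.
by rewrite probability_setC // /cdfG EFinB fineK ?fin_num_measure.
Qed.

Lemma measure_fiber_nested {d : measure_display} {T : measurableType d}
    {R : realType} (mu : {measure set T -> \bar R}) (A B : set T)
    (P : T -> R -> Prop) (a b c xa xb xc s : R) :
  measurable A -> measurable B -> B `<=` A ->
  (forall t s1 s2, P t s1 -> P t s2 -> s1 = s2) ->
  (forall t, ~ A t -> P t c) -> (forall t, A t -> ~ B t -> P t a) ->
  (forall t, B t -> P t b) ->
  mu (~` A) = xc%:E -> mu (A `\` B) = xa%:E -> mu B = xb%:E ->
  mu [set t | P t s] =
    ((if s == c then 1 else 0) * xc + (if s == a then 1 else 0) * xa
     + (if s == b then 1 else 0) * xb)%:E.
Proof.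
move=> mA mB BA P_fun Pc Pa Pb muC muD muB.
set F := [set t | P t s].
have fiberI X v : (forall t, X t -> P t v) -> F `&` X = if s == v then X else set0.
  move=> PX; case: eqP => [sv|neq]; apply/seteqP; split => t //=.
  - by case.
  - by move=> Xt; split => //; rewrite /F /= sv; exact: PX.
  - by case=> Pts Xt; apply: neq; exact: P_fun Pts (PX t Xt).
have mfiberI X v : measurable X -> (forall t, X t -> P t v) -> measurable (F `&` X).
  by move=> mX /fiberI ->; case: ifP.
have mu_fiberI X v x : (forall t, X t -> P t v) -> mu X = x%:E ->
    mu (F `&` X) = ((if s == v then 1 else 0) * x)%:E.
  by move=> /fiberI -> muX; case: eqP => _; rewrite ?muX ?mul1r ?measure0 ?mul0r.
have PD : forall t, (A `\` B) t -> P t a by move=> t []; exact: Pa.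
have mC := mfiberI _ _ (measurableC mA) Pc.
have mD := mfiberI _ _ (measurableD mA mB) PD.
have mB' := mfiberI _ _ mB Pb.
have -> : F = F `&` ~` A `|` F `&` (A `\` B) `|` F `&` B.
  by rewrite -!setIUr -setUA (setUC _ B) setDUK // setUC setUv setIT.
have disjCD : F `&` ~` A `&` (F `&` (A `\` B)) = set0.
  by apply/seteqP; split => t // [[_ nAt] [_ [At _]]].
have disjB : (F `&` ~` A `|` F `&` (A `\` B)) `&` (F `&` B) = set0.
  apply/seteqP; split => t // [[[_ nAt]|[_ [_ nBt]]] [_ Bt]].
  - exact: nAt (BA t Bt).
  - exact: nBt.
rewrite !EFinD -(mu_fiberI _ _ _ Pc muC) -(mu_fiberI _ _ _ PD muD).
rewrite -(mu_fiberI _ _ _ Pb muB) (measureU mu (measurableU _ _ mC mD) mB' disjB).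
by rewrite (measureU mu mC mD disjCD).
Qed.

Lemma continuous_least_sublevel_eq {R : realType} (g : R -> R) (c y pb : R) :
  {within [set z : R | 0 <= z], continuous g} ->
  0 < pb <= y -> g (y - pb) <= c ->
  (forall p, 0 <= p <= y -> g (y - p) <= c -> pb <= p) -> g (y - pb) = c.
Proof.
move=> g_cont /andP[pb_gt0 pb_le] g_pb pb_least.
apply/eqP; rewrite eq_le g_pb /= leNgt; apply/negP => g_pb_lt.
have [e /= e_gt0 near_lt] : exists2 e : R, 0 < e &
    forall z, 0 <= z -> `|y - pb - z| < e -> g z < c.
  have := (subspace_continuousP _ _).1 g_cont (y - pb) (ltac:(rewrite /=; lra)).
  move=> /cvgr_lt /(_ c g_pb_lt); rewrite /within /= => /nbhs_ballP[e /= e_gt0 He].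
  by exists e => // z z_ge0 near_z; exact: He.
pose p := Num.max 0 (pb - e / 2).
have p_lt_pb : p < pb by rewrite gt_max; apply/andP; split; lra.
have p_ge : pb - e / 2 <= p by rewrite le_max lexx orbT.
have p_ge0 : 0 <= p by rewrite le_max lexx.
have : pb <= p.
  apply: pb_least; first by apply/andP; split; lra.
  apply/ltW/near_lt; first lra.
  by rewrite ltr_norml; apply/andP; split; lra.
by rewrite leNgt p_lt_pb.
Qed.

Section equivalent_variation.
Context {R : realType} (U0 U1 : R -> R).
Hypothesis U0_incr : forall z1 z2 : R, 0 < z1 -> z1 < z2 -> U0 z1 < U0 z2.
Hypothesis U1_incr : forall z1 z2 : R, 0 <= z1 -> z1 < z2 -> U1 z1 < U1 z2.

Lemma U0_le {z1 z2 : R} : 0 < z1 -> z1 <= z2 -> U0 z1 <= U0 z2.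
Proof. by move=> z1_gt0; rewrite le_eqVlt => /predU1P[->//|/(U0_incr _ _ z1_gt0)/ltW]. Qed.

Lemma U1_le {z1 z2 : R} : 0 <= z1 -> z1 <= z2 -> U1 z1 <= U1 z2.
Proof. by move=> z1_ge0; rewrite le_eqVlt => /predU1P[->//|/(U1_incr _ _ z1_ge0)/ltW]. Qed.

Lemma U0_inj {z1 z2 : R} : 0 < z1 -> 0 < z2 -> U0 z1 = U0 z2 -> z1 = z2.
Proof.
move=> z1_gt0 z2_gt0 eqU; case: (ltgtP z1 z2) => // lt_z.
- by have := U0_incr _ _ z1_gt0 lt_z; rewrite eqU ltxx.
- by have := U0_incr _ _ z2_gt0 lt_z; rewrite eqU ltxx.
Qed.

Lemma avail_value_inj {p r z1 z2 : R} :
  avail_value U0 U1 z1 p r -> avail_value U0 U1 z2 p r -> z1 = z2.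
Proof.
have attained z : avail_value U0 U1 z p r ->
    (0 < z /\ U0 z = r) \/ (0 <= z - p /\ U1 (z - p) = r).
  by case=> -[z_ok [Uz _]]; [left | right].
have bounded z : avail_value U0 U1 z p r ->
    (0 < z -> U0 z <= r) /\ (0 <= z - p -> U1 (z - p) <= r).
  by case=> -[_ [<- U_le]]; split.
have nlt z z' : avail_value U0 U1 z p r -> avail_value U0 U1 z' p r -> ~ z < z'.
  move=> /attained[[z_gt0 U0z]|[zp_ge0 U1z]] /bounded[U0z' U1z'] lt_zz'.
  - by have := U0z' (lt_trans z_gt0 lt_zz'); have := U0_incr _ _ z_gt0 lt_zz'; lra.
  - have lt_zp : z - p < z' - p by rewrite ltrD2r.
    by have := U1z' (ltW (le_lt_trans zp_ge0 lt_zp)); have := U1_incr _ _ zp_ge0 lt_zp; lra.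
move=> h1 h2; apply/eqP; rewrite eq_le !leNgt.
by apply/andP; split; apply/negP; [exact: nlt h2 h1 | exact: nlt h1 h2].
Qed.

Lemma avail_value_good1 (y p z r : R) :
  p <= z <= y -> U0 y <= r -> U1 (z - p) = r -> avail_value U0 U1 z p r.
Proof.
move=> /andP[pz zy] U0y_le U1z; right; split; first by rewrite subr_ge0.
by split=> // z_gt0; exact: le_trans (U0_le z_gt0 zy) U0y_le.
Qed.

Definition buyers (y p : R) : set (\bar R) :=
  [set t | (p%:E < t)%E /\ U0 y < U1 (y - p)].

Lemma buyers_subset {y p q : R} : p <= q <= y -> buyers y q `<=` buyers y p.
Proof.
move=> /andP[pq qy] t [q_lt_t buy_q]; split; first by apply: le_lt_trans q_lt_t; rewrite lee_fin.
by apply: (lt_le_trans buy_q); apply: U1_le; lra.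
Qed.

Section price_increase.
Variables (y p' p'' : R).

Lemma is_EV_unique t (S1 S2 : R) :
  is_EV U0 U1 y p' p'' t S1 -> is_EV U0 U1 y p' p'' t S2 -> S1 = S2.
Proof.
rewrite /is_EV; case: ifP => _; [|case: ifP => _].
- by move=> h1 h2; have := avail_value_inj h1 h2; lra.
- by move=> h1 h2; have := avail_value_inj h1 h2; lra.
- by move=> [S1_lt U0S1] [S2_lt U0S2]; have := U0_inj S1_lt S2_lt (etrans U0S1 (esym U0S2)); lra.
Qed.

Lemma is_EV_nonbuyer t : 0 < y -> p' <= p'' <= y ->
  ~ buyers y p' t -> is_EV U0 U1 y p' p'' t 0.
Proof.
move=> y_gt0 prices nbuy'.
have stay_put : (p'%:E < t)%E -> avail_value U0 U1 (y - 0) p' (U0 y).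
  move=> p'_lt_t; left; rewrite subr0; split=> //; split=> // _.
  by rewrite leNgt; apply/negP => buy'; exact: nbuy'.
rewrite /is_EV; case: ifP => [p''_lt_t|_]; last by case: ifP => // _; rewrite subr0.
have p'_lt_t : (p'%:E < t)%E.
  by apply: le_lt_trans p''_lt_t; rewrite lee_fin; case/andP: prices.
rewrite max_l; first exact: stay_put.
by rewrite leNgt; apply/negP => buy''; apply/nbuy'/(buyers_subset prices).
Qed.

Lemma is_EV_switcherE t (S : R) : buyers y p' t -> ~ buyers y p'' t ->
  is_EV U0 U1 y p' p'' t S = avail_value U0 U1 (y - S) p' (U0 y).
Proof.
move=> [p'_lt_t _] nbuy''; rewrite /is_EV p'_lt_t; case: ifP => // p''_lt_t.
by rewrite max_l // leNgt; apply/negP => buy''; exact: nbuy''.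
Qed.

Lemma is_EV_switcher (pbar : R) t : p' <= pbar <= y -> U1 (y - pbar) = U0 y ->
  buyers y p' t -> ~ buyers y p'' t -> is_EV U0 U1 y p' p'' t (pbar - p').
Proof.
move=> /andP[p'_le pbar_le] U1pbar buy' nbuy''; rewrite is_EV_switcherE //.
by apply: (avail_value_good1 y) => //; [apply/andP; split; lra | rewrite -U1pbar; congr U1; lra].
Qed.

Lemma is_EV_stayer t : p' <= p'' <= y ->
  buyers y p'' t -> is_EV U0 U1 y p' p'' t (p'' - p').
Proof.
move=> /andP[p'_le p''_le] [p''_lt_t buy'']; rewrite /is_EV p''_lt_t /= max_r ?ltW //.
by apply: (avail_value_good1 y); [apply/andP; split; lra | exact: ltW | congr U1; lra].
Qed.

Lemma switcher_EV_bounds (pbar : R) t (S : R) : 0 < y -> 0 <= p' <= y ->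
  (forall p, 0 <= p <= y -> U1 (y - p) <= U0 y -> pbar <= p) ->
  buyers y p' t -> ~ buyers y p'' t -> is_EV U0 U1 y p' p'' t S ->
  pbar - p' <= S <= y - p'.
Proof.
move=> y_gt0 /andP[p'_ge0 p'_le] pbar_least buy' nbuy''; rewrite is_EV_switcherE //.
case=> [[yS_gt0 [U0yS U1_le_U0]]|[ySp_ge0 [U1yS U0_le_U0]]].
- have S0 : y - S = y := U0_inj yS_gt0 y_gt0 U0yS.
  have := U1_le_U0; rewrite S0 subr_ge0 => /(_ p'_le).
  by rewrite leNgt buy'.2.
- have S_ge0 : 0 <= S.
    rewrite leNgt; apply/negP => S_lt0.
    have y_lt : y < y - S by lra.
    have := U0_le_U0 (lt_trans y_gt0 y_lt).
    by rewrite leNgt U0_incr.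
  have : pbar <= S + p'.
    apply: pbar_least; first by apply/andP; split; lra.
    by rewrite (_ : y - (S + p') = y - S - p') ?U1yS //; lra.
  by move=> pbar_le; apply/andP; split; lra.
Qed.

End price_increase.

Lemma buyersE (y p : R) :
  buyers y p = if U0 y < U1 (y - p) then [set t | (p%:E < t)%E] else set0.
Proof.
apply/seteqP; split => t; case: ifP => buy //=; first by case.
by case=> _; rewrite buy.
Qed.

Lemma measurable_buyers (y p : R) : measurable (buyers y p).
Proof. by rewrite buyersE; case: ifP => _; [exact: measurable_EFin_gt | exact: measurable0]. Qed.

Context (mu : probability (\bar R) R).

Lemma measure_buyers (y p : R) : mu (buyers y p) = (q1 U0 U1 mu y p)%:E.
Proof.
by rewrite buyersE /q1; case: ifP => _; rewrite ?probability_EFin_gt ?measure0 ?mul1r ?mul0r.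
Qed.

Lemma measure_nonbuyers (y p : R) : mu (~` buyers y p) = (1 - q1 U0 U1 mu y p)%:E.
Proof. by rewrite EFinB -measure_buyers probability_setC //; exact: measurable_buyers. Qed.

Lemma measure_switchers (y p' p'' : R) : p' <= p'' <= y ->
  mu (buyers y p' `\` buyers y p'') = (q1 U0 U1 mu y p' - q1 U0 U1 mu y p'')%:E.
Proof.
move=> prices; rewrite measureD; try exact: measurable_buyers.
- by rewrite (setIidr (buyers_subset prices)) EFinB -!measure_buyers.
- exact: le_lt_trans (probability_le1 mu (measurable_buyers y p')) (ltry 1).
Qed.

Lemma q1_nonbuyer (y p : R) : U1 (y - p) <= U0 y -> q1 U0 U1 mu y p = 0.
Proof. by rewrite leNgt => /negbTE nbuy; rewrite /q1 nbuy mul0r. Qed.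

Lemma q1_eq0_nonbuyer (y p : R) : cdfG mu p < 1 -> q1 U0 U1 mu y p = 0 -> U1 (y - p) <= U0 y.
Proof. by move=> G_lt1; rewrite /q1 leNgt; case: ifP => // _; rewrite mul1r => ?; exfalso; lra. Qed.

Lemma choke_price_indifference (y p pbar : R) :
  {within [set z : R | 0 <= z], continuous U1} -> 0 <= p <= y ->
  cdfG mu pbar < 1 -> 0 <= pbar <= y -> q1 U0 U1 mu y pbar = 0 ->
  (forall q, 0 <= q <= y -> U1 (y - q) <= U0 y -> pbar <= q) ->
  U0 y < U1 (y - p) -> p < pbar /\ U1 (y - pbar) = U0 y.
Proof.
move=> U1_cont /andP[p_ge0 p_le] G_lt1 /andP[pbar_ge0 pbar_le] q1pbar pbar_least buy.
have nonbuy : U1 (y - pbar) <= U0 y := q1_eq0_nonbuyer y pbar G_lt1 q1pbar.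
have p_lt_pbar : p < pbar.
  rewrite ltNge; apply/negP => pbar_le_p.
  have : U1 (y - p) <= U1 (y - pbar) by apply: U1_le; lra.
  lra.
split=> //; apply: continuous_least_sublevel_eq => //.
by apply/andP; split; lra.
Qed.

End equivalent_variation.

Theorem theorem2 (R : realType) (U0 U1 : R -> R) (mu : probability (\bar R) R)
  (y p' p'' pbar : R) :
  0 < y -> 0 <= p' -> p' < p'' -> p'' <= y ->
  (* Assumption 1 (i): U0 : (0,oo) -> [0,oo) strictly increasing,
     U1 : [0,oo) -> [0,oo) continuous and strictly increasing *)
  (forall z, 0 < z -> 0 <= U0 z) ->
  (forall z1 z2, 0 < z1 -> z1 < z2 -> U0 z1 < U0 z2) ->
  (forall z, 0 <= z -> 0 <= U1 z) ->
  (forall z1 z2, 0 <= z1 -> z1 < z2 -> U1 z1 < U1 z2) ->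
  {within [set z : R | 0 <= z], continuous U1} ->
  (* Assumption 1 (ii) *)
  (forall y0, 0 < y0 -> exists2 pb, 0 <= pb <= y0 & U1 (y0 - pb) <= U0 y0) ->
  (* Assumption 2 *)
  cdfG mu 0 = 0 ->
  (* pbar = min { p in [0,y] | q1(p,y) = 0 } *)
  0 <= pbar <= y -> q1 U0 U1 mu y pbar = 0 ->
  (forall p, 0 <= p <= y -> q1 U0 U1 mu y p = 0 -> pbar <= p) ->
  (* Part 1: under Assumption 3, the distribution of S^EV *)
  ((forall t : R, cdfG mu t < 1) ->
   forall s : R,
     mu [set t | is_EV U0 U1 y p' p'' t s] =
       ((if s == 0 then 1 else 0) * (1 - q1 U0 U1 mu y p')
        + (if s == pbar - p' then 1 else 0) * (q1 U0 U1 mu y p' - q1 U0 U1 mu y p'')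
        + (if s == p'' - p' then 1 else 0) * q1 U0 U1 mu y p'')%:E)
  /\
  (* Part 2: without Assumption 3, the switchers *)
  (let switchers := [set t : \bar R |
        ((p'%:E < t)%E /\ U0 y < U1 (y - p')) /\
        ~ ((p''%:E < t)%E /\ U0 y < U1 (y - p''))] in
   mu switchers = (q1 U0 U1 mu y p' - q1 U0 U1 mu y p'')%:E /\
   forall t S, switchers t -> is_EV U0 U1 y p' p'' t S ->
     pbar - p' <= S <= y - p').
Proof.
move=> y_gt0 p'_ge0 p'_lt_p'' p''_le_y _ U0_incr _ U1_incr U1_cont _ _
  pbar_range q1pbar pbar_min.
have prices : p' <= p'' <= y by rewrite p''_le_y ltW.
have p'_range : 0 <= p' <= y by apply/andP; split; lra.
have pbar_least p : 0 <= p <= y -> U1 (y - p) <= U0 y -> pbar <= p.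
  by move=> p_range /(q1_nonbuyer U0 U1 mu y p); exact: pbar_min.
split=> [A3 s|switchers].
- apply: (measure_fiber_nested mu (buyers U0 U1 y p') (buyers U0 U1 y p'')).
  + exact: measurable_buyers.
  + exact: measurable_buyers.
  + exact: buyers_subset.
  + by move=> t S1 S2; apply: is_EV_unique.
  + by move=> t nbuy'; apply: is_EV_nonbuyer.
  + move=> t buy' nbuy''.
    have [p'_lt_pbar indiff] := choke_price_indifference U0 U1 U1_incr mu y p' pbar
      U1_cont p'_range (A3 pbar) pbar_range q1pbar pbar_least buy'.2.
    by apply: is_EV_switcher => //; rewrite (ltW p'_lt_pbar); case/andP: pbar_range.
  + by move=> t; apply: is_EV_stayer.
  + exact: measure_nonbuyers.
  + exact: measure_switchers.
  + exact: measure_buyers.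
- split; first exact: measure_switchers.
  by move=> t S [buy' nbuy'']; apply: switcher_EV_bounds.
Qed.
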